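(* Let $(G,\precsim)$ be a compatible quasi-ordered abelian group and $G^v=G\setminus G^o$. Then $G^v$ is a final segment of $G$. Moreover, for any $g\in G^v$ and $h\in G$ we have $cl(g+h)\leq\max(cl(g),cl(h))$, and if $h\precnsim g$ then $g\sim g+h$.
   Context: A compatible quasi-ordered abelian group is an abelian group $G$ with a total quasi-order $\precsim$ (reflexive, transitive, any two elements comparable) such that, writing $a\sim b$ for $a\precsim b\wedge b\precsim a$: $(Q_1)$ $x\sim0\Rightarrow x=0$; $(Q_2)$ $x\precsim y\wedge y\not\sim z\Rightarrow x+z\precsim y+z$, for all $x,y,z$. $cl(g)$ is the $\sim$-class of $g$; the classes are totally ordered by $cl(a)\le cl(b)\Leftrightarrow a\precsim b$. $a\precnsim b$ means $a\precsim b$ and $a\not\sim b$. An element $g$ is o-type if $cl(g)=\{g\}$ and $g$ is not of order $2$; $G^o$ is the set of o-type elements. A set $S$ is a final segment if $s\in S$, $s\precsim a$ imply $a\in S$. *)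

From HB Require Import structures.
From mathcomp Require Import all_boot all_order all_algebra.
Set Implicit Arguments. Unset Strict Implicit. Unset Printing Implicit Defensive.
Import GRing.Theory.
Local Open Scope ring_scope.

Definition qeqv (G : zmodType) (qle : rel G) (x y : G) : Prop :=
  qle x y /\ qle y x.

Definition cqoag (G : zmodType) (qle : rel G) : Prop :=
  [/\ (forall x, qle x x),
      (forall x y z, qle x y -> qle y z -> qle x z),
      (forall x y, qle x y \/ qle y x),
      (forall x, qeqv qle x 0 -> x = 0) &
      (forall x y z, qle x y -> ~ qeqv qle y z -> qle (x + z) (y + z))].

Definition order2 (G : zmodType) (g : G) : Prop := g != 0 /\ g + g = 0.

Definition otype (G : zmodType) (qle : rel G) (g : G) : Prop :=
  (forall x, qeqv qle x g -> x = g) /\ ~ order2 g.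

Definition vtype (G : zmodType) (qle : rel G) (g : G) : Prop := ~ otype qle g.

Definition final_segment (G : zmodType) (qle : rel G) (S : G -> Prop) : Prop :=
  forall s a, S s -> qle s a -> S a.

(* representative of max(cl a, cl b) *)
Definition qmax (G : zmodType) (qle : rel G) (a b : G) : G :=
  if qle a b then b else a.

From mathcomp Require Import all_boot all_order all_algebra.
Import GRing.Theory.
Local Open Scope ring_scope.
Set Implicit Arguments. Unset Strict Implicit.

(* A nonzero element is of v-type exactly when it is equivalent to its
   opposite: a class containing x != y forces y ~ -y, since translating
   x ≾ y and y ≾ x by -y squeezes x - y into the class of 0.  This property
   propagates upwards, because one of a + g, a - g stays in the class of any
   a ≻ g.  For such w the set {x | x ≺ w} is closed under negation and
   addition, which gives both bounds on cl(g + h). *)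

Section CompatibleQuasiOrder.

Variables (G : zmodType) (qle : rel G).
Hypothesis hG : cqoag qle.

Lemma qle_refl x : qle x x.
Proof. by case: hG. Qed.

Lemma qle_trans y x z : qle x y -> qle y z -> qle x z.
Proof. by case: hG => _ trans _ _ _; apply: trans. Qed.

Lemma qle_total x y : qle x y \/ qle y x.
Proof. by case: hG. Qed.

Lemma qle_of_nqle x y : ~~ qle x y -> qle y x.
Proof. by case: (qle_total x y) => [->|]. Qed.

Lemma qeqv_eq0 x : qeqv qle x 0 -> x = 0.
Proof. by case: hG => _ _ _ eq0 _; apply: eq0. Qed.

Lemma qle_add2r x y z : qle x y -> ~ qeqv qle y z -> qle (x + z) (y + z).
Proof. by case: hG => _ _ _ _ compat; apply: compat. Qed.

Lemma qle_qmaxl g h : qle g (qmax qle g h).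
Proof. by rewrite /qmax; case: ifP => // _; apply: qle_refl. Qed.

Lemma qle_qmaxr g h : qle h (qmax qle g h).
Proof.
by rewrite /qmax; case: ifP => [_|/negbT]; [apply: qle_refl | apply: qle_of_nqle].
Qed.

Lemma qeqv_opp_of_neq x y : qeqv qle x y -> x != y -> qeqv qle y (- y).
Proof.
move=> [xy yx] x_neq_y.
have [/andP[] //|] := boolP (qle y (- y) && qle (- y) y).
move=> n_y_ny; have {}n_y_ny : ~ qeqv qle y (- y).
  by case=> le_y_ny le_ny_y; rewrite le_y_ny le_ny_y in n_y_ny.
have le_xy_0 : qle (x - y) 0 by rewrite -(subrr y); apply: qle_add2r.
have le_0_xy : qle 0 (x - y).
  rewrite -(subrr y); apply: qle_add2r => // -[le_x_ny le_ny_x].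
  by apply: n_y_ny; split; [apply: qle_trans le_x_ny | apply: qle_trans xy].
by move: x_neq_y; rewrite -subr_eq0 (qeqv_eq0 (conj le_xy_0 le_0_xy)) eqxx.
Qed.

Definition opp_equiv g := g != 0 /\ qeqv qle g (- g).

Lemma opp_equivN g : opp_equiv g -> opp_equiv (- g).
Proof. by case=> g_nz [? ?]; split; rewrite ?oppr_eq0 ?opprK. Qed.

Lemma opp_equiv_nle0 g : opp_equiv g -> ~~ qle g 0.
Proof.
move=> [g_nz [_ le_ng_g]]; apply/negP => le_g_0.
have le_0_ng : qle 0 (- g).
  have := @qle_add2r g 0 (- g) le_g_0; rewrite subrr add0r; apply.
  move=> [le_0_ng le_ng_0].
  by move: g_nz; rewrite -oppr_eq0 (qeqv_eq0 (conj le_ng_0 le_0_ng)) eqxx.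
by move: g_nz; rewrite (qeqv_eq0 (conj le_g_0 (qle_trans le_0_ng le_ng_g))) eqxx.
Qed.

Lemma opp_equiv_ge0 g : opp_equiv g -> qle 0 g.
Proof. by move/opp_equiv_nle0/qle_of_nqle. Qed.

Lemma opp_equiv_upper g a : opp_equiv g -> qle g a -> opp_equiv a.
Proof.
move=> vg le_g_a; have a_nz : a != 0.
  by apply: contraTneq le_g_a => ->; apply: opp_equiv_nle0.
split=> //; have [g_nz [_ le_ng_g]] := vg.
have [le_a_g|nle_a_g] := boolP (qle a g).
  have [<-|g_neq_a] := eqVneq g a; first by case: vg.
  exact: qeqv_opp_of_neq (conj le_g_a le_a_g) g_neq_a.
(* Translating by -g or by g, whichever moves a down, produces a second
   element of the class of a. *)
have [le_ag_a|le_a_ag] := qle_total (a + g) a.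
  have le_a_asg : qle a (a - g).
    have := @qle_add2r (a + g) a (- g) le_ag_a; rewrite addrK; apply.
    by move=> [le_a_ng _]; rewrite (qle_trans le_a_ng le_ng_g) in nle_a_g.
  have le_asg_a : qle (a - g) a.
    have := @qle_add2r 0 g (a - g) (opp_equiv_ge0 vg).
    rewrite add0r (addrC g) subrK; apply.
    by move=> [_ le_asg_g]; rewrite (qle_trans le_a_asg le_asg_g) in nle_a_g.
  apply: (qeqv_opp_of_neq (conj le_asg_a le_a_asg)).
  by rewrite -subr_eq0 addrAC subrr add0r oppr_eq0.
have le_ag_a : qle (a + g) a.
  have := @qle_add2r 0 (- g) (a + g) (opp_equiv_ge0 (opp_equivN vg)).
  rewrite add0r (addrC (- g)) addrK; apply.
  move=> [_ le_ag_ng].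
  by rewrite (qle_trans le_a_ag (qle_trans le_ag_ng le_ng_g)) in nle_a_g.
apply: (qeqv_opp_of_neq (conj le_ag_a le_a_ag)).
by rewrite -subr_eq0 addrAC subrr add0r.
Qed.

Lemma vtypeE g : vtype qle g <-> opp_equiv g.
Proof.
split=> [not_otype|[g_nz [le_g_ng le_ng_g]] [class_g not_order2]]; last first.
  have ng_eq : - g = g by apply: class_g (conj le_ng_g le_g_ng).
  by apply: not_order2; split=> //; rewrite -{1}ng_eq addNr.
have [g0|g_nz] := eqVneq g 0.
  by exfalso; apply: not_otype; rewrite g0; split=> [x /qeqv_eq0 //|[]]; rewrite eqxx.
have [/andP[le_g_ng le_ng_g]|n_g_ng] := boolP (qle g (- g) && qle (- g) g).
  by split.
exfalso; apply: not_otype; split.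
  move=> x x_g; apply/eqP; apply: contraNT n_g_ng => x_neq_g.
  by have [-> ->] := qeqv_opp_of_neq x_g x_neq_g.
move=> [_ gg0]; have ng_eq : - g = g by apply/eqP; rewrite eq_sym -addr_eq0 gg0.
by rewrite ng_eq qle_refl in n_g_ng.
Qed.

Lemma opp_equiv_qle_opp w x : opp_equiv w -> qle w (- x) -> qle w x.
Proof.
move=> vw le_w_nx; have [_ [le_nx_x _]] := opp_equiv_upper vw le_w_nx.
by rewrite opprK in le_nx_x; apply: qle_trans le_w_nx le_nx_x.
Qed.

Lemma opp_equiv_qle_add w x y :
  opp_equiv w -> qle w (x + y) -> qle w x \/ qle w y.
Proof.
move=> vw le_w_xy; have [_ [le_xy_nxy _]] := opp_equiv_upper vw le_w_xy.
have [le_w_x|nle_w_x] := boolP (qle w x); [by left | right].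
apply: contraNT (nle_w_x) => nle_w_y; apply: opp_equiv_qle_opp vw _.
have le_x_nxy : qle x (- (x + y)).
  exact: qle_trans (qle_of_nqle nle_w_x) (qle_trans le_w_xy le_xy_nxy).
have le_xy_nx : qle (x + y) (- x).
  have -> : - x = - (x + y) + y by rewrite opprD addrNK.
  apply: qle_add2r le_x_nxy _.
  move=> [le_nxy_y _].
  by rewrite (qle_trans le_w_xy (qle_trans le_xy_nxy le_nxy_y)) in nle_w_y.
exact: qle_trans le_w_xy le_xy_nx.
Qed.

End CompatibleQuasiOrder.

Theorem mainTheorem7 (G : zmodType) (qle : rel G) (hG : cqoag qle) :
  final_segment qle (vtype qle) /\
  (forall g h : G, vtype qle g ->
     qle (g + h) (qmax qle g h) /\
     (qle h g /\ ~ qeqv qle h g -> qeqv qle g (g + h))).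
Proof.
have vE := vtypeE hG.
split=> [s a /vE vs le_s_a | g h /vE vg]; first exact/vE/(opp_equiv_upper hG vs).
split.
  have [//|le_m_gh] := qle_total hG (g + h) (qmax qle g h).
  have v_gh := opp_equiv_upper hG (opp_equiv_upper hG vg (qle_qmaxl hG g h)) le_m_gh.
  case: (opp_equiv_qle_add hG v_gh (qle_refl hG (g + h))) => le_gh;
    apply: (qle_trans hG le_gh); [exact: qle_qmaxl | exact: qle_qmaxr].
move=> [le_h_g n_hg].
have le_g_gh : qle g (g + h).
  have le_g_ghnh : qle g (g + h - h) by rewrite addrK qle_refl.
  case: (opp_equiv_qle_add hG vg le_g_ghnh) => //.
  move=> /(opp_equiv_qle_opp hG vg) le_g_h.
  by case: n_hg; split.
split=> //; have v_gh := opp_equiv_upper hG vg le_g_gh.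
case: (opp_equiv_qle_add hG v_gh (qle_refl hG (g + h))) => // le_gh_h.
exact: (qle_trans hG le_gh_h le_h_g).
Qed.
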